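(* Fix $\beta\in\mathbb R$ and let $p_n=\frac12+r_n$ for $n\ge1$, with $r_n$ as in the context. Then $D(n)\sim n(\log\log n)^\beta$ as $n\to\infty$.
   Context: Fix $\beta\in\mathbb R$ and an integer $n_1\ge16$ such that $\frac14\left(\frac1n+\frac{1}{n(\log\log n)^\beta}\right)\in(0,1/2)$ for all $n\ge n_1$. Define $r_n=\frac14\left(\frac1n+\frac{1}{n(\log\log n)^\beta}\right)$ for $n\ge n_1$ and $r_n=r_{n_1}$ for $1\le n<n_1$. Consider the chain: $p_0=1$, $q_0=0$, $p_n=\frac12+r_n$, $q_n=1-p_n$ for $n\ge1$; $X=(X_k)_{k\ge0}$ is the Markov chain on $\mathbb Z_+$ with $X_0=0$, $\mathbb P(X_{k+1}=n+1\mid X_k=n)=p_n$, $\mathbb P(X_{k+1}=n-1\mid X_k=n)=q_n$. Let $\rho_k=q_k/p_k$ ($k\ge1$), and for $m\ge0$ let $D(m)=1+\sum_{j=1}^{\infty}\rho_{m+1}\cdots\rho_{m+j}$. *)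

From HB Require Import structures.
From mathcomp Require Import all_boot all_order all_algebra.
From mathcomp Require Import all_classical all_reals all_analysis.
Set Implicit Arguments. Unset Strict Implicit. Unset Printing Implicit Defensive.
Import Order.TTheory GRing.Theory Num.Theory.
Local Open Scope ring_scope.

Definition r_formula (R : realType) (beta : R) (n : nat) : R :=
  4^-1 * ((n%:R)^-1 + (n%:R * (ln (ln (n%:R : R))) `^ beta)^-1).

Definition r_seq (R : realType) (beta : R) (n1 n : nat) : R :=
  if (n < n1)%N then r_formula beta n1 else r_formula beta n.

Definition p_seq (R : realType) (beta : R) (n1 n : nat) : R :=
  if n == 0%N then 1 else 2^-1 + r_seq beta n1 n.

Definition q_seq (R : realType) (beta : R) (n1 n : nat) : R :=
  1 - p_seq beta n1 n.

Definition rho (R : realType) (beta : R) (n1 k : nat) : R :=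
  q_seq beta n1 k / p_seq beta n1 k.

(* D(m) = 1 + sum_{j>=1} rho_{m+1} ... rho_{m+j}, as an extended real
   (the terms are nonnegative, so the series always has a value in \bar R). *)
Definition D (R : realType) (beta : R) (n1 m : nat) : \bar R :=
  (1%E + \sum_(1 <= j <oo) (\prod_(m.+1 <= i < (m + j).+1) rho beta n1 i)%:E)%E.

From HB Require Import structures.
From mathcomp Require Import all_boot all_order all_algebra.
From mathcomp Require Import all_classical all_reals all_analysis.
From mathcomp Require Import lra ring.
Import Order.TTheory GRing.Theory Num.Theory.
Local Open Scope classical_set_scope.
Local Open Scope ring_scope.

(* Write F n = n (log log n)^beta, T m j = rho_(m+1) ... rho_(m+j), so that
   D m = sum_j T m j, and E n = F n - rho_(n+1) F (n+1).  Summation by parts gives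
     F m = sum_(j < K) T m j E (m + j) + T m K F (m + K).
   Since rho_(n+1) = (1 - s)/(1 + s) with s = 2 r_(n+1) and s F (n+1) = (1 + (log log (n+1))^beta)/2,
   E n is an explicit expression tending to 1; this already gives (1 - del) D m <= F m
   for large m.  For the reverse inequality the remainder T m K F (m + K) must vanish:
   from E >= 1/2 and log log (n+1) - log log n <= 1 / F n one gets
     T m K F (m + K) <= F m exp (-(log log (m + K) - log log m) / 2). *)

Section real_inequalities.
Context {R : realType}.
Implicit Types x y a b : R.

Lemma ln_le_subr1 {x} : 0 < x -> ln x <= x - 1.
Proof. by move=> x0; have := @le_ln1Dx R (x - 1); rewrite addrCA subrr addr0; apply; lra. Qed.

Lemma lnB_le {a b} : 0 < a -> a <= b -> 0 <= ln b - ln a <= (b - a) / a.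
Proof.
move=> a0 ab; have b0 : 0 < b by lra.
rewrite subr_ge0 ler_ln ?posrE //=.
rewrite -lnV ?posrE // -lnM ?posrE ?invr_gt0 //.
by rewrite mulrBl divff ?gt_eqF // ab ln_le_subr1 // divr_gt0.
Qed.

Lemma normr_expR_sub1_le {y} : `|y| <= 2^-1 -> `|expR y - 1| <= 2 * `|y|.
Proof.
move=> hy.
have h1 := expR_ge1Dx y; have h2 := expR_ge1Dx (- y).
have e0 := expR_gt0 y.
have h3 : expR y * expR (- y) = 1 by rewrite -expRD subrr expR0.
have h4 : expR y * (1 - y) <= 1 by rewrite -h3 ler_pM2l //; lra.
case: (lerP 0 y) => y0.
  by rewrite (ger0_norm y0) in hy *; rewrite ger0_norm; nra.
by rewrite (ltr0_norm y0) in hy *; rewrite ler_norml; apply/andP; split; nra.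
Qed.

Lemma dist1_div_le {d f del : R} : 0 < f -> 0 < del <= 2^-1 ->
  (1 - del) * d <= f <= (1 + del) * d -> `|1 - d / f| <= 2 * del.
Proof.
move=> f0 /andP[del0 del1] /andP[h1 h2].
have k1 : (1 - del) * (d / f) <= 1 by rewrite mulrA ler_pdivrMr // mul1r.
have k2 : 1 <= (1 + del) * (d / f) by rewrite mulrA ler_pdivlMr // mul1r.
by rewrite ler_norml; apply/andP; split; nra.
Qed.

End real_inequalities.

Lemma near_oo_forall_ge {P : nat -> Prop} :
  (\forall n \near \oo, P n) -> \forall m \near \oo, forall n, (m <= n)%N -> P n.
Proof. by move=> [N _ hN]; exists N => // m /= Nm n mn; apply: hN; apply: leq_trans mn. Qed.

Lemma near_oo_succ {P : nat -> Prop} :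
  (\forall n \near \oo, P n) -> \forall n \near \oo, P n.+1.
Proof. by move=> [N _ hN]; exists N => // n /= Nn; apply: hN; apply: leqW. Qed.

Section renewal_series.
Context {R : realType}.
Variables (a f : nat -> R).
Hypothesis a_ge0 : forall i, 0 <= a i.

Definition tail_prod m j := \prod_(m.+1 <= i < (m + j).+1) a i.
Definition defect n := f n - a n.+1 * f n.+1.

Lemma tail_prod0 m : tail_prod m 0 = 1.
Proof. by rewrite /tail_prod addn0 big_geq. Qed.

Lemma tail_prodS m j : tail_prod m j.+1 = tail_prod m j * a (m + j).+1.
Proof. by rewrite /tail_prod addnS big_nat_recr //= ltnS leq_addr. Qed.

Lemma tail_prod_ge0 m j : 0 <= tail_prod m j.
Proof. by apply: prodr_ge0 => i _; apply: a_ge0. Qed.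

Lemma telescope_defect m K :
  f m = \sum_(0 <= j < K) tail_prod m j * defect (m + j)%N + tail_prod m K * f (m + K)%N.
Proof.
elim: K => [|K IH]; first by rewrite big_geq // add0r tail_prod0 mul1r addn0.
by rewrite big_nat_recr //= tail_prodS addnS {1}IH /defect; ring.
Qed.

Lemma partial_sums_le m (c : R) K : (forall n, (m <= n)%N -> c <= defect n) ->
  0 <= f (m + K)%N -> c * \sum_(0 <= j < K) tail_prod m j <= f m.
Proof.
move=> hc f0; rewrite (telescope_defect m K) mulr_sumr -[X in X <= _]addr0.
apply: lerD; last exact: mulr_ge0 (tail_prod_ge0 _ _) f0.
apply: ler_sum => j _; rewrite mulrC ler_wpM2l ?tail_prod_ge0 //.
by apply: hc; apply: leq_addr.
Qed.

Lemma le_partial_sums m (c : R) K : (forall n, (m <= n)%N -> defect n <= c) ->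
  f m <= c * \sum_(0 <= j < K) tail_prod m j + tail_prod m K * f (m + K)%N.
Proof.
move=> hc; rewrite {1}(telescope_defect m K) mulr_sumr lerD2r.
apply: ler_sum => j _; rewrite [c * _]mulrC ler_wpM2l ?tail_prod_ge0 //.
by apply: hc; apply: leq_addr.
Qed.

(* Each step costs exp (-h/2), h = g (n+1) - g n:
   a (n+1) f (n+1) = f n - defect n <= f n - 1/2 <= f n (1 - h/2) as h f n <= 1. *)
Lemma tail_decay (g : nat -> R) m :
  (forall n, (m <= n)%N -> [/\ 0 < f n, 2^-1 <= defect n & g n.+1 - g n <= (f n)^-1]) ->
  forall K, tail_prod m K * f (m + K)%N <= f m * expR (- (g (m + K)%N - g m) / 2).
Proof.
move=> hm; elim=> [|K IH].
  by rewrite tail_prod0 mul1r addn0 subrr oppr0 mul0r expR0 mulr1.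
have [f0 hE hg] := hm (m + K)%N (leq_addr _ _).
set h := g (m + K).+1 - g (m + K)%N in hg.
have hf : h * f (m + K)%N <= 1 by rewrite -ler_pdivlMr // div1r.
have hexp : f (m + K)%N * (1 - h / 2) <= f (m + K)%N * expR (- h / 2).
  by rewrite ler_wpM2l ?(ltW f0) // -mulNr expR_ge1Dx.
have step : a (m + K).+1 * f (m + K).+1 <= f (m + K)%N * expR (- h / 2).
  by move: hE hexp; rewrite /defect mulrBr mulr1 mulrCA; lra.
rewrite tail_prodS addnS -mulrA.
apply: le_trans (ler_wpM2l (tail_prod_ge0 _ _) step) _.
rewrite mulrA; apply: le_trans (ler_wpM2r (ltW (expR_gt0 _)) IH) _.
rewrite -mulrA -expRD /h.
by rewrite (_ : _ + _ = - (g (m + K).+1 - g m) / 2) //; ring.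
Qed.

Lemma tail_series_bounds (g : nat -> R) m del : 0 < del <= 2^-1 ->
  (forall n, (m <= n)%N ->
     [/\ 0 < f n, `|defect n - 1| <= del & g n.+1 - g n <= (f n)^-1]) ->
  (forall M, exists K, M <= g (m + K)%N) ->
  exists d : R, (\sum_(0 <= j <oo) (tail_prod m j)%:E = d%:E)%E /\
                (1 - del) * d <= f m <= (1 + del) * d.
Proof.
move=> /andP[del0 del1] hm g_unbounded.
have fm0 : 0 < f m by have [] := hm m (leqnn m).
have defect_near n : (m <= n)%N -> 1 - del <= defect n <= 1 + del.
  by move=> /hm[_ + _]; rewrite ler_distl.
have defect_ge n (hn : (m <= n)%N) := proj1 (andP (defect_near n hn)).
have defect_le n (hn : (m <= n)%N) := proj2 (andP (defect_near n hn)).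
have sums_le K : \sum_(0 <= j < K) tail_prod m j <= f m / (1 - del).
  rewrite ler_pdivlMr; last lra.
  rewrite mulrC; apply: partial_sums_le defect_ge _.
  by have [/ltW] := hm (m + K)%N (leq_addr _ _).
have terms_ge0 n : (0 <= n)%N -> true -> (0 <= (tail_prod m n)%:E)%E.
  by rewrite lee_fin tail_prod_ge0.
have ser_le : (\sum_(0 <= j <oo) (tail_prod m j)%:E <= (f m / (1 - del))%:E)%E.
  apply: lime_le; first exact: is_cvg_nneseries.
  by apply: nearW => K; rewrite sumEFin lee_fin sums_le.
have ser_fin : (\sum_(0 <= j <oo) (tail_prod m j)%:E)%E \is a fin_num.
  by rewrite ge0_fin_numE ?nneseries_ge0 // (le_lt_trans ser_le) ?ltry.
set d := fine (\sum_(0 <= j <oo) (tail_prod m j)%:E)%E.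
exists d; split; first by rewrite fineK.
have le_d K : \sum_(0 <= j < K) tail_prod m j <= d.
  by rewrite -lee_fin fineK // -sumEFin; apply: nneseries_lim_ge.
have d_le : d <= f m / (1 - del) by rewrite -lee_fin fineK.
apply/andP; split; first by rewrite mulrC -ler_pdivlMr //; lra.
apply/ler_addgt0Pr => eta eta0.
have [K hK] := g_unbounded (g m - 2 * ln (eta / f m)).
have hsub := le_partial_sums m (1 + del) K defect_le.
have hdecay : tail_prod m K * f (m + K)%N <= f m * expR (- (g (m + K)%N - g m) / 2).
  apply: tail_decay => n hn; have [fn0 _ hg] := hm n hn; split => //.
  by have := defect_ge n hn; lra.
have hexp : f m * expR (- (g (m + K)%N - g m) / 2) <= eta.
  rewrite -ler_pdivlMl // [_^-1 * eta]mulrC.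
  by rewrite -[X in _ <= X]lnK ?posrE ?divr_gt0 // ler_expR; lra.
have := ler_wpM2l (_ : 0 <= 1 + del) (le_d K); lra.
Qed.

End renewal_series.

Section loglog_scale.
Context {R : realType} (beta : R).

Definition loglog (n : nat) : R := ln (ln n%:R).
Definition loglog_pow n := loglog n `^ beta.
Definition loglog_scale n := n%:R * loglog_pow n.

Lemma loglog_ge M : \forall n \near \oo, M <= loglog n.
Proof.
near=> n.
have h1 : expR (expR M) < n%:R by near: n; apply: nbhs_infty_gtr.
have n0 : 0 < (n%:R : R) by apply: lt_trans h1; apply: expR_gt0.
have h2 : expR M <= ln (n%:R : R).
  by rewrite -[X in X <= _]expRK ler_ln ?posrE ?expR_gt0 // ltW.
rewrite /loglog -[X in X <= _]expRK ler_ln ?posrE ?expR_gt0 //.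
by apply: lt_le_trans h2; apply: expR_gt0.
Unshelve. all: by end_near.
Qed.

Lemma loglog_ge1_ln {n} : 1 <= loglog n -> 2 <= ln (n%:R : R) /\ 1 < (n%:R : R).
Proof.
move=> h.
have l0 : 0 < ln (n%:R : R).
  by rewrite ltNge; apply/negP => hl; move: h; rewrite /loglog ln0 //; lra.
have := expR_ge1Dx (loglog n); rewrite {2}/loglog lnK ?posrE // => h2.
split; first lra.
by rewrite ltNge; apply/negP => /ln_le0; lra.
Qed.

Lemma loglog_pow_gt0 {n} : 1 <= loglog n -> 0 < loglog_pow n.
Proof. by move=> h; apply: powR_gt0; lra. Qed.

Lemma loglog_scale_gt0 {n} : 1 <= loglog n -> 0 < loglog_scale n.
Proof.
move=> h; have [_ n1] := loglog_ge1_ln h.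
by rewrite mulr_gt0 ?loglog_pow_gt0 //; apply: lt_trans n1.
Qed.

(* (log log n)^g = exp (g ln L) with L = log log n, and ln L <= c L - 1 - ln c where
   |g| c <= 1/2, so (log log n)^g <= C (log n)^(1/2). *)
Lemma powR_loglog_small (g eps : R) : 0 < eps ->
  \forall n \near \oo, loglog n `^ g <= eps * ln (n%:R : R).
Proof.
move=> e0.
pose c : R := (2 * (`|g| + 1))^-1.
have g0 := normr_ge0 g.
have c0 : 0 < c by rewrite invr_gt0; lra.
have gc : `|g| * c <= 2^-1.
  by rewrite ler_pdivrMr; [rewrite ler_pdivlMl //; lra | lra].
near=> n.
have L1 : 1 <= loglog n by near: n; apply: loglog_ge.
have LM : 2 * (`|g| * (-1 - ln c) - ln eps) <= loglog n by near: n; apply: loglog_ge.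
have [l2 _] := loglog_ge1_ln L1.
have L0 : 0 < loglog n by lra.
rewrite /powR gt_eqF // -[eps]lnK ?posrE // -[ln (n%:R : R)]lnK ?posrE; last lra.
rewrite -expRD ler_expR -/(loglog n).
have lnL0 : 0 <= ln (loglog n) by apply: ln_ge0.
have hlc : ln (loglog n) <= c * loglog n - 1 - ln c.
  by have := ln_le_subr1 (mulr_gt0 c0 L0); rewrite lnM ?posrE //; lra.
have hg : g * ln (loglog n) <= `|g| * ln (loglog n) by rewrite ler_wpM2r // ler_norm.
have hg2 : `|g| * ln (loglog n) <= `|g| * c * loglog n + `|g| * (-1 - ln c).
  by rewrite -mulrA -mulrDr ler_wpM2l //; lra.
have hg3 : `|g| * c * loglog n <= 2^-1 * loglog n by rewrite ler_wpM2r //; lra.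
lra.
Unshelve. all: by end_near.
Qed.

Lemma loglog_increment {n} : 1 <= loglog n ->
  0 <= loglog n.+1 - loglog n /\ (loglog n.+1 - loglog n) * (n%:R * ln (n%:R : R)) <= 1.
Proof.
move=> hL; have [ln2 n1] := loglog_ge1_ln hL.
have n0 : 0 < (n%:R : R) by lra.
have nS : (n%:R : R) <= n.+1%:R by rewrite ler_nat.
have /andP[h0 h1] := lnB_le n0 nS.
have ln0 : 0 < ln (n%:R : R) by lra.
have lnS : ln (n%:R : R) <= ln n.+1%:R by lra.
have /andP[dL0 h3] := lnB_le ln0 lnS.
rewrite -[n.+1%:R]natr1 addrAC subrr add0r natr1 in h1.
split => //.
rewrite mulrC -mulrA mulrC -ler_pdivlMr // mulrC -ler_pdivlMr //.
rewrite -/(loglog n) -/(loglog n.+1) in h3.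
by apply: le_trans h3 _; rewrite ler_pM2r ?invr_gt0 // -div1r mul1r.
Qed.

Lemma loglog_pow_increment {n} (e : R) : 1 <= loglog n -> 2 * `|beta| <= n%:R ->
  loglog_pow n <= e * ln (n%:R : R) ->
  `|n%:R * (loglog_pow n.+1 - loglog_pow n)| <= 2 * `|beta| * e.
Proof.
move=> hL nb hP.
have [ln2 _] := loglog_ge1_ln hL.
have [dL0 dL] := loglog_increment hL.
have L0 : 0 < loglog n by lra.
have LS : loglog n <= loglog n.+1 by lra.
have /andP[x0 xL] := lnB_le L0 LS.
set x := ln (loglog n.+1) - ln (loglog n) in x0 xL.
have x_dL : x <= loglog n.+1 - loglog n.
  by apply: le_trans xL _; rewrite ler_pdivrMr; [nra | lra].
have xn : n%:R * x <= (ln (n%:R : R))^-1.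
  rewrite -div1r ler_pdivlMr; last lra.
  apply: le_trans dL; rewrite mulrA [_ * n%:R]mulrC ler_wpM2r ?ler_wpM2l //; lra.
have b0 := normr_ge0 beta.
have p0 := loglog_pow_gt0 hL.
have bx : `|beta * x| <= 2^-1.
  rewrite normrM (ger0_norm x0).
  have : (ln (n%:R : R))^-1 <= 2^-1 by rewrite lef_pV2 ?posrE //; lra.
  by nra.
have -> : loglog_pow n.+1 = loglog_pow n * expR (beta * x).
  rewrite /loglog_pow /powR !gt_eqF ?(lt_le_trans ltr01 hL) //; last lra.
  by rewrite (esym (expRD _ _)) /x; congr expR; ring.
have /= := normr_expR_sub1_le bx; rewrite normrM (ger0_norm x0) => hexp.
rewrite -{2}[loglog_pow n]mulr1 -mulrBr mulrA normrM (ger0_norm (mulr_ge0 (ler0n _ _) (ltW p0))).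
apply: le_trans (ler_wpM2l (mulr_ge0 (ler0n _ _) (ltW p0)) hexp) _.
have hPl : loglog_pow n * (ln (n%:R : R))^-1 <= e by rewrite ler_pdivrMr; lra.
rewrite (_ : n%:R * _ * _ = 2 * `|beta| * (loglog_pow n * (n%:R * x))); last by ring.
rewrite ler_wpM2l ?mulr_ge0 //; apply: le_trans hPl.
by rewrite ler_wpM2l // ltW.
Qed.

Lemma loglog_pow_increment_small (e : R) : 0 < e ->
  \forall n \near \oo, `|n%:R * (loglog_pow n.+1 - loglog_pow n)| <= e.
Proof.
move=> e0; have b0 := normr_ge0 beta.
pose e' := e / (2 * `|beta| + 1).
have e'0 : 0 < e' by rewrite divr_gt0 //; lra.
have he' : 2 * `|beta| * e' <= e by rewrite /e' mulrA ler_pdivrMr; nra.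
near=> n; apply: le_trans he'; apply: loglog_pow_increment.
- by near: n; apply: loglog_ge.
- by near: n; apply: nbhs_infty_ger.
- by near: n; exact: powR_loglog_small _ _ e'0.
Unshelve. all: by end_near.
Qed.

Lemma loglog_pow_succ_small (e : R) : 0 < e -> \forall n \near \oo,
  [/\ n.+1%:R^-1 <= e, loglog_pow n.+1 <= e * n.+1%:R & (loglog_pow n.+1)^-1 <= e * n.+1%:R].
Proof.
move=> e0; near=> n.
have hL : 1 <= loglog n.+1 by near: n; exact: near_oo_succ (loglog_ge 1).
have [_ n1] := loglog_ge1_ln hL.
have ln_le : e * ln (n.+1%:R : R) <= e * n.+1%:R.
  by rewrite ler_wpM2l ?ltW //; have := ln_le_subr1 (lt_trans ltr01 n1); lra.
split.
- by rewrite invf_ple ?posrE //; near: n; exact: near_oo_succ (nbhs_infty_ger _).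
- apply: le_trans ln_le; rewrite /loglog_pow.
  by near: n; exact: near_oo_succ (powR_loglog_small _ _ e0).
- apply: le_trans ln_le; rewrite /loglog_pow -powRN.
  by near: n; exact: near_oo_succ (powR_loglog_small _ _ e0).
Unshelve. all: by end_near.
Qed.

Lemma loglog_increment_le_inv_scale {n} : 1 <= loglog n ->
  loglog_pow n <= ln (n%:R : R) -> loglog n.+1 - loglog n <= (loglog_scale n)^-1.
Proof.
move=> hL hP; have [dL0 dL] := loglog_increment hL.
have [_ n1] := loglog_ge1_ln hL.
rewrite -div1r ler_pdivlMr ?loglog_scale_gt0 //; apply: le_trans dL.
by rewrite ler_wpM2l // ler_wpM2l // ltW // (lt_trans ltr01 n1).
Qed.

End loglog_scale.

Section defect_algebra.
Context {R : realFieldType}.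
Implicit Types x p q s d t e : R.

(* With x = n, q = (log log (n+1))^beta and s = 2 r_(n+1), the hypothesis on s holds and
   the left-hand side is the defect E n. *)
Lemma defect_identity x p q s : 0 <= s -> s * ((x + 1) * q) = (q + 1) / 2 ->
  x * p - (1 - s) / (1 + s) * ((x + 1) * q) =
  (1 - x * (q - p) - q * s - x * (q - p) * s) / (1 + s).
Proof.
move=> s0 hs; have s1 : 1 + s != 0 by rewrite gt_eqF //; lra.
apply/eqP; rewrite -subr_eq0.
have -> : x * p - (1 - s) / (1 + s) * ((x + 1) * q) -
  (1 - x * (q - p) - q * s - x * (q - p) * s) / (1 + s) =
  (2 * (s * ((x + 1) * q)) - (q + 1)) / (1 + s) by field.
by rewrite hs [2 * _]mulrC divfK ?subrr ?mul0r // pnatr_eq0.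
Qed.

Lemma defect_sub1_le {d t s e} : `|d| <= e -> 0 <= t <= e -> 0 <= s <= e -> e <= 1 ->
  `|(1 - d - t - d * s) / (1 + s) - 1| <= 4 * e.
Proof.
move=> hd /andP[t0 te] /andP[s0 se] e1.
have s1 : 0 < 1 + s by lra.
have -> : (1 - d - t - d * s) / (1 + s) - 1 = (- d - t - d * s - s) / (1 + s).
  by field; rewrite lt0r_neq0.
rewrite normrM [`|(1 + s)^-1|]gtr0_norm ?invr_gt0 //.
rewrite ler_pdivrMr //; move: hd; rewrite ler_norml => /andP[d1 d2].
rewrite ler_norml; apply/andP; split; nra.
Qed.

Lemma halved_inv_sum_small {x q e} : 0 < x -> 0 < q ->
  x^-1 <= e -> q <= e * x -> q^-1 <= e * x ->
  0 <= (x^-1 + (x * q)^-1) / 2 <= e /\ 0 <= q * ((x^-1 + (x * q)^-1) / 2) <= e.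
Proof.
move=> x0 q0 hx hq hqi.
have xi0 : 0 < x^-1 by rewrite invr_gt0.
have hxq : (x * q)^-1 <= e by rewrite invfM mulrC ler_pdivrMr // mulrC.
have hqx : q * x^-1 <= e by rewrite ler_pdivrMr.
have hw : q * (x * q)^-1 = x^-1 by rewrite invfM mulrCA mulfV ?gt_eqF ?mulr1.
have xq0 : 0 < (x * q)^-1 by rewrite invr_gt0 mulr_gt0.
rewrite mulrA mulrDr hw; split; apply/andP; split; nra.
Qed.

End defect_algebra.

Section birth_death_chain.
Context {R : realType} (beta : R) (n1 : nat).
Hypothesis hr : forall n : nat, (n1 <= n)%N ->
  0 < r_formula beta n /\ r_formula beta n < 2^-1.

Lemma rho_ge0 i : 0 <= rho beta n1 i.
Proof.
rewrite /rho /q_seq /p_seq; case: eqP => _; first by rewrite subrr mul0r.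
have [r0 r1] : 0 < r_seq beta n1 i /\ r_seq beta n1 i < 2^-1.
  by rewrite /r_seq; case: ltnP => h; apply: hr.
by apply: divr_ge0; lra.
Qed.

Lemma D_eq_tail_series m :
  D beta n1 m = (\sum_(0 <= j <oo) (tail_prod (rho beta n1) m j)%:E)%E.
Proof.
rewrite (nneseries_split 0 1); last by move=> k _; rewrite lee_fin tail_prod_ge0 //; exact: rho_ge0.
by rewrite add0n big_nat1 tail_prod0.
Qed.

Lemma rho_succ_eq {n} : (n1 <= n.+1)%N ->
  rho beta n1 n.+1 = (1 - 2 * r_formula beta n.+1) / (1 + 2 * r_formula beta n.+1).
Proof.
move=> hn; rewrite /rho /q_seq /p_seq /r_seq ltnNge hn /=.
by field; apply/lt0r_neq0; have [] := hr _ hn; lra.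
Qed.

Lemma defect_scale_eq n : (n1 <= n.+1)%N -> 1 <= loglog n.+1 :> R ->
  let q := loglog_pow beta n.+1 in
  let s := (n.+1%:R^-1 + (n.+1%:R * q)^-1) / 2 in
  let d := n%:R * (q - loglog_pow beta n) in
  defect (rho beta n1) (loglog_scale beta) n = (1 - d - q * s - d * s) / (1 + s).
Proof.
move=> hn hL q s d.
have q0 : 0 < q := loglog_pow_gt0 beta hL.
have s0 : 0 <= s by rewrite divr_ge0 ?addr_ge0 ?invr_ge0 ?mulr_ge0 // ltW.
have q_neq0 : q != 0 by apply: lt0r_neq0.
have n1_neq0 : 1 + n%:R != 0 :> R by apply: lt0r_neq0; have := @ler0n R n; lra.
rewrite -defect_identity //; last by rewrite natr1 /s; field; rewrite q_neq0 n1_neq0.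
rewrite /defect (rho_succ_eq hn) /loglog_scale -/q natr1.
suff -> : 2 * r_formula beta n.+1 = s by [].
rewrite /s /q /loglog_pow /loglog /r_formula; field.
by rewrite -/(loglog n.+1) -/(loglog_pow beta n.+1) -/q q_neq0 n1_neq0.
Qed.

Lemma defect_near1 del : 0 < del ->
  \forall n \near \oo, `|defect (rho beta n1) (loglog_scale beta) n - 1| <= del.
Proof.
move=> del0.
pose e := Num.min (del / 4) 1.
have e0 : 0 < e by rewrite /e lt_min ltr01 andbT divr_gt0.
have e1 : e <= 1 by rewrite /e ge_min lexx orbT.
have e4 : 4 * e <= del.
  have : e <= del / 4 by rewrite /e ge_min lexx.
  lra.
near=> n.
have hn : (n1 <= n.+1)%N by apply: leqW; near: n; apply: nbhs_infty_ge.
have hL : 1 <= loglog n.+1 :> R by near: n; exact: near_oo_succ (loglog_ge 1).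
have hd : `|n%:R * (loglog_pow beta n.+1 - loglog_pow beta n)| <= e.
  by near: n; exact: loglog_pow_increment_small.
have [hx hq hqi] : [/\ n.+1%:R^-1 <= e, loglog_pow beta n.+1 <= e * n.+1%:R
                    & (loglog_pow beta n.+1)^-1 <= e * n.+1%:R].
  by near: n; exact: loglog_pow_succ_small.
have [hs ht] := halved_inv_sum_small (ltr0Sn _ _) (loglog_pow_gt0 beta hL) hx hq hqi.
rewrite defect_scale_eq //.
exact: le_trans (defect_sub1_le hd ht hs e1) e4.
Unshelve. all: by end_near.
Qed.

Lemma D_near_scale del : 0 < del <= 2^-1 ->
  \forall m \near \oo, exists d : R, D beta n1 m = d%:E /\ 0 < loglog_scale beta m /\
    (1 - del) * d <= loglog_scale beta m <= (1 + del) * d.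
Proof.
move=> hdel; have del0 : 0 < del by case/andP: hdel.
have step : \forall n \near \oo, [/\ 0 < loglog_scale beta n,
    `|defect (rho beta n1) (loglog_scale beta) n - 1| <= del &
    loglog n.+1 - loglog n <= (loglog_scale beta n)^-1].
  near=> n.
  have hL : 1 <= loglog n :> R by near: n; apply: loglog_ge.
  have hP : loglog_pow beta n <= ln n%:R.
    by rewrite -[ln _]mul1r; near: n; exact: powR_loglog_small beta _ ltr01.
  split; [exact: loglog_scale_gt0 | near: n; exact: defect_near1 |].
  exact: loglog_increment_le_inv_scale.
apply: filterS (near_oo_forall_ge step) => m hm.
have unbounded M : exists K, M <= loglog (m + K)%N :> R.
  by have [N _ hN] := loglog_ge (R := R) M; exists N; apply: hN; rewrite /= leq_addl.
have [d [hd hb]] := tail_series_bounds _ _ rho_ge0 _ _ _ hdel hm unbounded.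
exists d; split; first by rewrite D_eq_tail_series.
by have [] := hm m (leqnn m).
Unshelve. all: by end_near.
Qed.

End birth_death_chain.

Theorem lemma1 (R : realType) (beta : R) (n1 : nat)
  (hn1 : (16 <= n1)%N)
  (hr : forall n : nat, (n1 <= n)%N ->
          0 < r_formula beta n /\ r_formula beta n < 2^-1) :
  ((D beta n1 n * ((n%:R * (ln (ln (n%:R : R))) `^ beta)^-1)%:E)%E
     @[n --> \oo] --> 1%E).
Proof.
apply/fine_cvgP; split.
  have half : 0 < (2^-1 : R) <= 2^-1 by apply/andP; split; [rewrite invr_gt0 | ].
  apply: filterS (D_near_scale _ _ hr _ half) => n [d [-> _]].
  by rewrite -EFinM.
apply/cvgrPdist_le => eps eps0.
pose del := Num.min (eps / 2) 2^-1.
have hdel : 0 < del <= 2^-1 by rewrite /del lt_min ge_min lexx orbT invr_gt0 ltr0n divr_gt0.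
have del_eps : 2 * del <= eps.
  have : del <= eps / 2 by rewrite /del ge_min lexx.
  lra.
apply: filterS (D_near_scale _ _ hr _ hdel) => n [d [hd [f0 hb]]].
by rewrite /= hd -EFinM /=; apply: le_trans (dist1_div_le f0 hdel hb) del_eps.
Qed.
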